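(* For every $n\in\mathbb{Z}$ and $x\in\mathbb{R}$, $$E_{n+1}^k(x)=e^{x}\,E_{-n}^k(-x).$$
   Context: Fix $k\ge 0$. Partial order on $\mathbb{Z}$: $j\triangleleft n$ iff either ($|j|<|n|$ and $|n|-|j|$ is a positive even integer) or ($|j|=|n|$ and $n<j$). Let $\delta_k(x)=|2\sin x|^{2k}$ and $(f,g)_k=\frac{1}{2\pi}\int_0^{2\pi} f(x)\overline{g(x)}\delta_k(x)\,dx$. The non-symmetric Heckman–Opdam polynomials $E_n^k$, $n\in\mathbb{Z}$, are the functions on $\mathbb{R}$ of the form $E_n^k(x)=e^{nx}+\sum_{j\triangleleft n}c_{n,j}e^{jx}$ (finite sum) such that $(E_n^k(i\,\cdot),e^{ij\,\cdot})_k=0$ for all $j\triangleleft n$. It is known that they are eigenfunctions of the Cherednik operator $T^k f(x)=f'(x)+2k\frac{f(x)-f(-x)}{1-e^{-2x}}-kf(x)$: $T^kE_n^k=\tilde n E_n^k$, where $\tilde n=n+k$ if $n\ge0$ and $\tilde n=n-k$ if $n<0$. *)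

From Stdlib Require Import Reals ZArith.
From Coquelicot Require Import Coquelicot.
Open Scope R_scope.

Definition tri (j n : Z) : Prop :=
  ((Z.abs j < Z.abs n)%Z /\ Z.Even (Z.abs n - Z.abs j)) \/
  (Z.abs j = Z.abs n /\ (n < j)%Z).

Definition zsum (N : nat) (f : Z -> C) : C :=
  sum_n (fun i : nat => f (Z.of_nat i - Z.of_nat N)%Z) (2 * N).

Definition cis (t : R) : C := (cos t, sin t).

(* The function x |-> sum_j c_j e^{j x} (x real), for coefficients supported in
   [-|n|, |n|] (which contains n and all j ◁ n). *)
Definition Efun (n : Z) (c : Z -> C) (x : R) : C :=
  zsum (Z.abs_nat n) (fun j => (c j * RtoC (exp (IZR j * x)))%C).

(* The same expression evaluated at i x : x |-> sum_j c_j e^{i j x}. *)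
Definition Efun_i (n : Z) (c : Z -> C) (x : R) : C :=
  zsum (Z.abs_nat n) (fun j => (c j * cis (IZR j * x))%C).

(* weight delta_k(x) = |2 sin x|^{2k}  (with 0^0 = 1) *)
Definition delta (k x : R) : R :=
  if Req_EM_T (sin x) 0 then (if Req_EM_T k 0 then 1 else 0)
  else Rpower (Rabs (2 * sin x)) (2 * k).

Definition inner (k : R) (f g : R -> C) : C :=
  (RtoC (/ (2 * PI)) *
   RInt (V := C_R_CompleteNormedModule)
     (fun x => (f x * Cconj (g x) * RtoC (delta k x))%C) 0 (2 * PI))%C.

(* c is the coefficient family of the non-symmetric Heckman-Opdam polynomial
   E_n^k(x) = e^{n x} + sum_{j ◁ n} c_{n,j} e^{j x}. *)
Definition is_HO (k : R) (n : Z) (c : Z -> C) : Prop :=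
  c n = RtoC 1 /\
  (forall j : Z, j <> n -> ~ tri j n -> c j = RtoC 0) /\
  (forall j : Z, tri j n ->
     inner k (Efun_i n c) (fun x => cis (IZR j * x)) = RtoC 0).

(* In terms of coefficients the identity reads c_{n+1,j} = c_{-n,1-j}. The reflected family
   l |-> c_{-n,1-l} satisfies the defining conditions of E_{n+1}^k: j <| n+1 iff 1-j <| -n, and
   the substitution x |-> 2 pi - x, which preserves delta_k, turns the orthogonality of the
   reflected polynomial to e^{ijx} into that of E_{-n}^k to e^{i(1-j)x}. These conditions
   determine the coefficients: the difference D of two solutions is a trigonometric polynomial
   orthogonal to itself, so |D|^2 delta_k has integral 0, D vanishes wherever sin x <> 0, and
   integrating against e^{-ijx} shows that its coefficients vanish. *)

From Stdlib Require Import Reals ZArith Lia Lra Classical_Prop.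
From Coquelicot Require Import Coquelicot.
Open Scope R_scope.

(** * Sums over [-N, N] *)

Lemma zsum_O (f : Z -> C) : zsum 0 f = f 0%Z.
Proof. unfold zsum. simpl. apply sum_O. Qed.

Lemma zsum_S (N : nat) (f : Z -> C) :
  zsum (S N) f = (f (- Z.of_nat (S N))%Z + zsum N f + f (Z.of_nat (S N)))%C.
Proof.
  unfold zsum, sum_n.
  replace (2 * S N)%nat with (S (S (2 * N))) by lia.
  rewrite sum_n_Sm, sum_Sn_m, <- sum_n_m_S by lia.
  rewrite (sum_n_m_ext (fun i => f (Z.of_nat (S i) - Z.of_nat (S N))%Z)
             (fun i => f (Z.of_nat i - Z.of_nat N)%Z)) by (intros; f_equal; lia).
  replace (Z.of_nat 0 - Z.of_nat (S N))%Z with (- Z.of_nat (S N))%Z by lia.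
  replace (Z.of_nat (S (S (2 * N))) - Z.of_nat (S N))%Z with (Z.of_nat (S N)) by lia.
  reflexivity.
Qed.

Lemma zsum_ext_loc (N : nat) (f g : Z -> C) :
  (forall j, (Z.abs j <= Z.of_nat N)%Z -> f j = g j) -> zsum N f = zsum N g.
Proof. intros H. apply sum_n_ext_loc. intros i Hi. apply H. lia. Qed.

Lemma zsum_zero (N : nat) : zsum N (fun _ => 0%C) = 0%C.
Proof. induction N; [now rewrite zsum_O | rewrite zsum_S, IHN; ring]. Qed.

Lemma zsum_minus (N : nat) (f g : Z -> C) :
  zsum N (fun j => f j - g j)%C = (zsum N f - zsum N g)%C.
Proof. induction N; [now rewrite !zsum_O | rewrite !zsum_S, IHN; ring]. Qed.

Lemma zsum_conj (N : nat) (f : Z -> C) :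
  Cconj (zsum N f) = zsum N (fun j => Cconj (f j)).
Proof.
  induction N; [now rewrite !zsum_O | now rewrite !zsum_S, <- IHN, !Cplus_conj].
Qed.

Lemma zsum_mult_l (a : C) (N : nat) (f : Z -> C) :
  (a * zsum N f)%C = zsum N (fun j => a * f j)%C.
Proof. symmetry. apply (sum_n_mult_l (K := C_Ring)). Qed.

Lemma zsum_mult_r (a : C) (N : nat) (f : Z -> C) :
  (zsum N f * a)%C = zsum N (fun j => f j * a)%C.
Proof. symmetry. apply (sum_n_mult_r (K := C_Ring)). Qed.

Lemma zsum_kronecker (N : nat) (j0 : Z) (v : C) : (Z.abs j0 <= Z.of_nat N)%Z ->
  zsum N (fun j => if Z.eq_dec j j0 then v else 0%C) = v.
Proof.
  induction N as [|N IH]; intros H.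
  - rewrite zsum_O. destruct (Z.eq_dec 0 j0); [reflexivity | lia].
  - rewrite zsum_S. destruct (Z_le_gt_dec (Z.abs j0) (Z.of_nat N)) as [Hin|Hout].
    + rewrite IH by exact Hin.
      destruct (Z.eq_dec (- Z.of_nat (S N)) j0), (Z.eq_dec (Z.of_nat (S N)) j0); try lia. ring.
    + rewrite (zsum_ext_loc N _ (fun _ => 0%C)), zsum_zero.
      * destruct (Z.eq_dec (- Z.of_nat (S N)) j0), (Z.eq_dec (Z.of_nat (S N)) j0); try lia; ring.
      * intros j Hj. destruct (Z.eq_dec j j0); [lia | reflexivity].
Qed.

Lemma zsum_widen (N M : nat) (f : Z -> C) :
  (N <= M)%nat -> (forall j, (Z.of_nat N < Z.abs j)%Z -> f j = 0%C) ->
  zsum M f = zsum N f.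
Proof.
  intros HNM Hf. induction HNM as [|M HNM IH]; [reflexivity|].
  rewrite zsum_S, IH, !Hf by lia. ring.
Qed.

(* Both sides run over [-M, M+1], each omitting one endpoint. *)
Lemma zsum_one_sub_add (M : nat) (f : Z -> C) :
  (zsum M (fun m => f (1 - m)%Z) + f (- Z.of_nat M)%Z =
   zsum M f + f (Z.of_nat M + 1)%Z)%C.
Proof.
  induction M as [|M IH].
  - rewrite !zsum_O. simpl. ring.
  - rewrite !zsum_S.
    replace (1 - Z.of_nat (S M))%Z with (- Z.of_nat M)%Z by lia.
    replace (1 - - Z.of_nat (S M))%Z with (Z.of_nat (S M) + 1)%Z by lia.
    replace (Z.of_nat M + 1)%Z with (Z.of_nat (S M)) in IH by lia.
    transitivity (f (Z.of_nat (S M) + 1)%Z + f (- Z.of_nat (S M))%Z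
                  + (zsum M (fun m => f (1 - m)%Z) + f (- Z.of_nat M)%Z))%C; [ring|].
    rewrite IH. ring.
Qed.

Lemma zsum_one_sub (N1 N2 : nat) (f : Z -> C) :
  (forall l, (Z.of_nat N2 < Z.abs l)%Z -> f l = 0%C) ->
  (forall m, (Z.of_nat N1 < Z.abs m)%Z -> f (1 - m)%Z = 0%C) ->
  zsum N1 (fun m => f (1 - m)%Z) = zsum N2 f.
Proof.
  intros H2 H1. set (M := (N1 + N2 + 1)%nat).
  rewrite <- (zsum_widen N1 M), <- (zsum_widen N2 M) by (auto; lia).
  pose proof (zsum_one_sub_add M f) as E.
  rewrite (H2 (- Z.of_nat M)%Z), (H2 (Z.of_nat M + 1)%Z) in E by lia.
  rewrite <- (Cplus_0_r (zsum M _)), E. ring.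
Qed.

Lemma Even_abs_sub_iff (a b : Z) : Z.Even (Z.abs a - Z.abs b) <-> Z.Even (a - b).
Proof.
  rewrite <- !Z.even_spec, !Z.even_sub.
  destruct (Z.abs_spec a) as [[_ ->]|[_ ->]], (Z.abs_spec b) as [[_ ->]|[_ ->]];
    rewrite ?Z.even_opp; reflexivity.
Qed.

(* In the tie case |j| = |m|, m < j forces j = -m, so the parity condition holds there too. *)
Lemma tri_iff (j m : Z) :
  tri j m <-> Z.Even (m - j) /\
              ((Z.abs j < Z.abs m)%Z \/ (Z.abs j = Z.abs m /\ (m < j)%Z)).
Proof.
  unfold tri. rewrite Even_abs_sub_iff. split.
  - intros [[Hlt He]|[Heq Hlt]]; [tauto|]. split; [exists m; lia | tauto].
  - intros [He [Hlt|Heq]]; tauto.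
Qed.

Lemma tri_one_sub (j m : Z) : tri j m <-> tri (1 - j) (1 - m).
Proof.
  rewrite !tri_iff.
  split; intros [[t Ht] H]; (split; [exists (- t)%Z; lia | lia]).
Qed.

Lemma tri_abs_le (j m : Z) : tri j m -> (Z.abs j <= Z.abs m)%Z.
Proof. unfold tri. lia. Qed.

(** * Integrals of complex functions over [0, 2 pi] *)

Definition Ccontinuous (f : R -> C) : Prop :=
  forall x, continuous (fun t => fst (f t)) x /\ continuous (fun t => snd (f t)) x.

Lemma Ccontinuous_ext (f g : R -> C) :
  (forall x, f x = g x) -> Ccontinuous f -> Ccontinuous g.
Proof.
  intros E Hf x. destruct (Hf x) as [H1 H2].
  split;
    [apply (continuous_ext (fun t => fst (f t))) | apply (continuous_ext (fun t => snd (f t)))];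
    auto; intros; now rewrite E.
Qed.

Lemma Ccontinuous_const (c : C) : Ccontinuous (fun _ => c).
Proof. intros x. split; apply continuous_const. Qed.

Lemma Ccontinuous_RtoC (g : R -> R) :
  (forall x, continuous g x) -> Ccontinuous (fun x => RtoC (g x)).
Proof. intros Hg x. split; [apply Hg | apply continuous_const]. Qed.

Lemma Ccontinuous_plus (f g : R -> C) :
  Ccontinuous f -> Ccontinuous g -> Ccontinuous (fun x => f x + g x)%C.
Proof.
  intros Hf Hg x. destruct (Hf x) as [F1 F2], (Hg x) as [G1 G2].
  split; [exact (continuous_plus _ _ x F1 G1) | exact (continuous_plus _ _ x F2 G2)].
Qed.

Lemma Ccontinuous_mult (f g : R -> C) :
  Ccontinuous f -> Ccontinuous g -> Ccontinuous (fun x => f x * g x)%C.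
Proof.
  intros Hf Hg x. destruct (Hf x) as [F1 F2], (Hg x) as [G1 G2]. split.
  - exact (continuous_plus _ _ x (continuous_mult _ _ x F1 G1)
             (continuous_opp _ x (continuous_mult _ _ x F2 G2))).
  - exact (continuous_plus _ _ x (continuous_mult _ _ x F1 G2) (continuous_mult _ _ x F2 G1)).
Qed.

Lemma Ccontinuous_conj (f : R -> C) : Ccontinuous f -> Ccontinuous (fun x => Cconj (f x)).
Proof.
  intros Hf x. destruct (Hf x) as [F1 F2]. split; [exact F1 | exact (continuous_opp _ x F2)].
Qed.

Lemma Ccontinuous_cis (a : R) : Ccontinuous (fun x => cis (a * x)).
Proof.
  intros x. assert (H : continuous (fun t => a * t) x).
  { exact (continuous_mult _ _ x (continuous_const a x) (continuous_id x)). }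
  split; [exact (continuous_cos_comp _ x H) | exact (continuous_sin_comp _ x H)].
Qed.

Lemma Ccontinuous_zsum (N : nat) (F : Z -> R -> C) :
  (forall j, Ccontinuous (F j)) -> Ccontinuous (fun x => zsum N (fun j => F j x)).
Proof.
  intros HF. induction N as [|N IH].
  - apply (Ccontinuous_ext (F 0%Z)); [intros; now rewrite zsum_O | apply HF].
  - eapply Ccontinuous_ext; [intros; symmetry; apply zsum_S|].
    apply Ccontinuous_plus; [apply Ccontinuous_plus|]; auto.
Qed.

Lemma ex_RInt_Ccontinuous (f : R -> C) (a b : R) :
  Ccontinuous f -> ex_RInt (V := C_R_CompleteNormedModule) f a b.
Proof.
  intros Hf.
  apply (ex_RInt_fct_extend_pair (U := R_NormedModule) (V := R_NormedModule));
    apply (ex_RInt_continuous (V := R_CompleteNormedModule)); intros; apply Hf.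
Qed.

Definition int2pi (f : R -> C) : C :=
  RInt (V := C_R_CompleteNormedModule) f 0 (2 * PI).

Lemma int2pi_pair (f : R -> C) : Ccontinuous f ->
  int2pi f = (RInt (fun t => fst (f t)) 0 (2 * PI), RInt (fun t => snd (f t)) 0 (2 * PI)).
Proof.
  intros Hf. unfold int2pi. apply (is_RInt_unique (V := C_R_CompleteNormedModule)).
  apply (is_RInt_fct_extend_pair (U := R_NormedModule) (V := R_NormedModule));
    apply (RInt_correct (V := R_CompleteNormedModule));
    apply (ex_RInt_continuous (V := R_CompleteNormedModule)); intros; apply Hf.
Qed.

Lemma int2pi_ext (f g : R -> C) :
  (forall x, 0 < x < 2 * PI -> f x = g x) -> int2pi f = int2pi g.
Proof.
  intros H. unfold int2pi. apply (RInt_ext (V := C_R_CompleteNormedModule)).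
  intros x. pose proof PI_RGT_0. rewrite Rmin_left, Rmax_right by lra. apply H.
Qed.

Lemma int2pi_plus (f g : R -> C) : Ccontinuous f -> Ccontinuous g ->
  int2pi (fun x => f x + g x)%C = (int2pi f + int2pi g)%C.
Proof.
  intros Hf Hg. unfold int2pi.
  apply (RInt_plus (V := C_R_CompleteNormedModule)); now apply ex_RInt_Ccontinuous.
Qed.

Lemma int2pi_scal (a : C) (f : R -> C) : Ccontinuous f ->
  int2pi (fun x => a * f x)%C = (a * int2pi f)%C.
Proof.
  intros Hf.
  assert (Ha : Ccontinuous (fun x => a * f x)%C)
    by (apply Ccontinuous_mult; [apply Ccontinuous_const | exact Hf]).
  assert (Ex : forall g : R -> R, (forall x, continuous g x) -> ex_RInt g 0 (2 * PI))
    by (intros; now apply (ex_RInt_continuous (V := R_CompleteNormedModule))).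
  assert (E1 := Ex _ (fun x => proj1 (Hf x))). assert (E2 := Ex _ (fun x => proj2 (Hf x))).
  rewrite !int2pi_pair by assumption. unfold Cmult. simpl. f_equal.
  - rewrite (RInt_minus (V := R_CompleteNormedModule)), !(RInt_scal (V := R_CompleteNormedModule));
      auto; apply (ex_RInt_scal (V := R_NormedModule)); auto.
  - rewrite (RInt_plus (V := R_CompleteNormedModule)), !(RInt_scal (V := R_CompleteNormedModule));
      auto; apply (ex_RInt_scal (V := R_NormedModule)); auto.
Qed.

Lemma int2pi_reflect (f : R -> C) : Ccontinuous f ->
  int2pi (fun x => f (2 * PI - x)) = int2pi f.
Proof.
  intros Hf. unfold int2pi.
  apply (is_RInt_unique (V := C_R_CompleteNormedModule)).
  assert (H := is_RInt_comp_lin (V := C_R_NormedModule) f (opp one) (2 * PI) 0 (2 * PI)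
                 (opp (RInt (V := C_R_CompleteNormedModule) f 0 (2 * PI)))).
  apply is_RInt_opp in H.
  - rewrite opp_opp in H. eapply is_RInt_ext; [|exact H].
    intros x _. cbv beta. rewrite scal_opp_one, opp_opp. f_equal. change (opp one) with (-1). ring.
  - replace (opp one * 0 + 2 * PI) with (2 * PI) by (change (opp one) with (-1); ring).
    replace (opp one * (2 * PI) + 2 * PI) with 0 by (change (opp one) with (-1); ring).
    apply (is_RInt_swap (V := C_R_NormedModule)), (RInt_correct (V := C_R_CompleteNormedModule)).
    now apply ex_RInt_Ccontinuous.
Qed.

Lemma int2pi_zsum (N : nat) (F : Z -> R -> C) : (forall j, Ccontinuous (F j)) ->
  int2pi (fun x => zsum N (fun j => F j x)) = zsum N (fun j => int2pi (F j)).
Proof.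
  intros HF. induction N as [|N IH].
  - rewrite zsum_O. apply int2pi_ext. intros; apply zsum_O.
  - rewrite zsum_S, <- IH, <- !int2pi_plus; auto using Ccontinuous_zsum, Ccontinuous_plus.
    apply int2pi_ext. intros; apply zsum_S.
Qed.

Lemma int2pi_eq_0 (f : R -> C) :
  (forall x, 0 < x < 2 * PI -> sin x <> 0 -> f x = 0%C) -> int2pi f = 0%C.
Proof.
  intros Hf. pose proof PI_RGT_0 as Hpi.
  assert (Z : forall a b, 0 <= a < b -> b <= 2 * PI -> (forall x, a < x < b -> sin x <> 0) ->
            is_RInt (V := C_R_NormedModule) f a b (RtoC 0)).
  { intros a b Hab Hb Hs.
    pose proof (is_RInt_const (V := C_R_NormedModule) a b (RtoC 0)) as H.
    change (scal (b - a) (RtoC 0)) with ((b - a) * 0, (b - a) * 0) in H.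
    rewrite Rmult_0_r in H.
    apply (is_RInt_ext _ f) in H; [exact H|].
    intros x Hx. rewrite Rmin_left, Rmax_right in Hx by lra.
    symmetry. apply Hf; [lra | now apply Hs]. }
  unfold int2pi. apply (is_RInt_unique (V := C_R_CompleteNormedModule)).
  rewrite <- (Cplus_0_r (RtoC 0)).
  apply (is_RInt_Chasles (V := C_R_NormedModule)) with PI; apply Z; try lra; intros x Hx.
  - pose proof (sin_gt_0 x). lra.
  - pose proof (sin_lt_0 x). lra.
Qed.

Lemma cis_add (a b : R) : (cis a * cis b)%C = cis (a + b).
Proof. unfold cis, Cmult; simpl. rewrite cos_plus, sin_plus. f_equal; ring. Qed.

Lemma cis_conj (a : R) : Cconj (cis a) = cis (- a).
Proof. unfold cis, Cconj; simpl. now rewrite cos_neg, sin_neg. Qed.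

Lemma cis_periodic (a : R) (l : Z) : cis (a + 2 * IZR l * PI) = cis a.
Proof.
  assert (Hnat : forall (b : R) (p : nat), cis (b + 2 * INR p * PI) = cis b)
    by (intros; unfold cis; now rewrite cos_period, sin_period).
  destruct (Z_le_gt_dec 0 l).
  - rewrite <- (Z2Nat.id l), <- INR_IZR_INZ by lia. apply Hnat.
  - rewrite <- (Hnat _ (Z.to_nat (- l))), INR_IZR_INZ, Z2Nat.id, opp_IZR by lia.
    f_equal. ring.
Qed.

Lemma int2pi_cis (l : Z) :
  int2pi (fun x => cis (IZR l * x)) = if Z.eq_dec l 0 then RtoC (2 * PI) else 0%C.
Proof.
  rewrite int2pi_pair by apply Ccontinuous_cis. simpl.
  destruct (Z.eq_dec l 0) as [->|Hl].
  - rewrite (RInt_ext (fun t => cos (0 * t)) (fun _ => 1)),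
      (RInt_ext (fun t => sin (0 * t)) (fun _ => 0))
      by (intros; now rewrite Rmult_0_l, ?cos_0, ?sin_0).
    rewrite !RInt_const. unfold RtoC. change (scal (2 * PI - 0) 1) with ((2 * PI - 0) * 1).
    change (scal (2 * PI - 0) 0) with ((2 * PI - 0) * 0). f_equal; ring.
  - apply not_0_IZR in Hl.
    assert (E : cis (IZR l * (2 * PI)) = cis 0)
      by (rewrite <- (cis_periodic 0 l); f_equal; ring).
    unfold cis in E. rewrite cos_0, sin_0 in E. injection E as Ecos Esin.
    unfold RtoC. f_equal.
    + erewrite (is_RInt_unique (V := R_CompleteNormedModule)).
      2:{ apply (is_RInt_derive (fun t => sin (IZR l * t) / IZR l)).
          * intros x _. auto_derive; [auto | field; auto].
          * intros x _. apply continuity_pt_filterlim. reg. }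
      rewrite Esin, Rmult_0_r, sin_0. unfold minus, plus, opp; simpl. field. auto.
    + erewrite (is_RInt_unique (V := R_CompleteNormedModule)).
      2:{ apply (is_RInt_derive (fun t => - cos (IZR l * t) / IZR l)).
          * intros x _. auto_derive; [auto | field; auto].
          * intros x _. apply continuity_pt_filterlim. reg. }
      rewrite Ecos, Rmult_0_r, cos_0. unfold minus, plus, opp; simpl. field. auto.
Qed.

Lemma RInt_nonneg_eq_0 (g : R -> R) (a b x0 : R) :
  (forall x, continuous g x) -> (forall x, a < x < b -> 0 <= g x) ->
  RInt g a b = 0 -> a < x0 < b -> g x0 = 0.
Proof.
  intros Hc Hpos HI Hx0.
  destruct (Hpos x0 Hx0) as [Hg|]; [exfalso | auto].
  assert (Hnear : locally x0 (fun y => g x0 / 2 < g y))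
    by (apply (Hc x0 (fun u => g x0 / 2 < u)), open_gt; lra).
  destruct Hnear as [d Hd].
  set (h := Rmin d (Rmin (x0 - a) (b - x0)) / 2).
  assert (Hh : 0 < h /\ h < d /\ h < x0 - a /\ h < b - x0).
  { assert (0 < Rmin d (Rmin (x0 - a) (b - x0)))
      by (apply Rmin_glb_lt; [apply cond_pos | apply Rmin_glb_lt; lra]).
    pose proof (Rmin_l d (Rmin (x0 - a) (b - x0))). pose proof (Rmin_r d (Rmin (x0 - a) (b - x0))).
    pose proof (Rmin_l (x0 - a) (b - x0)). pose proof (Rmin_r (x0 - a) (b - x0)).
    unfold h. lra. }
  assert (Ex : forall u v, ex_RInt g u v)
    by (intros; apply (ex_RInt_continuous (V := R_CompleteNormedModule)); auto).
  assert (Hleft : 0 <= RInt g a (x0 - h))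
    by (apply RInt_ge_0; [lra | auto | intros; apply Hpos; lra]).
  assert (Hright : 0 <= RInt g (x0 + h) b)
    by (apply RInt_ge_0; [lra | auto | intros; apply Hpos; lra]).
  assert (Hmid : 0 < RInt g (x0 - h) (x0 + h)).
  { apply RInt_gt_0; [lra | | auto].
    intros y Hy. assert (g x0 / 2 < g y); [|lra].
    apply Hd. apply Rabs_lt_between'. lra. }
  rewrite <- (RInt_Chasles (V := R_CompleteNormedModule) g a (x0 - h) b),
    <- (RInt_Chasles (V := R_CompleteNormedModule) g (x0 - h) (x0 + h) b) in HI by auto.
  change (RInt g a (x0 - h) + (RInt g (x0 - h) (x0 + h) + RInt g (x0 + h) b) = 0) in HI.
  lra.
Qed.

(* [Rpower 0 r = 1] (as [ln 0 = 0]), so the power function is extended by [0] at [0] by hand. *)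
Definition Rpower0 (r t : R) : R := if Rlt_dec 0 t then Rpower t r else 0.

Lemma continuous_Rpower0 (r t : R) : 0 < r -> continuous (Rpower0 r) t.
Proof.
  intros Hr. destruct (Rtotal_order t 0) as [Ht|[->|Ht]].
  - apply (continuous_ext_loc _ (fun _ => 0)); [|apply continuous_const].
    apply (filter_imp (fun y => y < 0)); [|exact (open_lt 0 t Ht)].
    intros y Hy. unfold Rpower0. destruct (Rlt_dec 0 y); lra.
  - apply filterlim_locally. intros eps.
    assert (Hd : 0 < Rpower eps (/ r)) by apply exp_pos.
    exists (mkposreal _ Hd). intros y Hy. apply Rabs_lt_between' in Hy. simpl in Hy.
    pose proof (cond_pos eps).
    apply Rabs_lt_between'. unfold Rpower0.
    destruct (Rlt_dec 0 0) as [|_]; [lra|]. destruct (Rlt_dec 0 y); [|split; lra].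
    split; [pose proof (exp_pos (r * ln y)); unfold Rpower; lra|].
    replace (0 + eps) with (Rpower (Rpower eps (/ r)) r).
    + apply Rlt_Rpower_l; lra.
    + rewrite Rpower_mult, Rinv_l, Rpower_1 by lra. ring.
  - apply (continuous_ext_loc _ (fun y => exp (r * ln y))).
    + apply (filter_imp (fun y => 0 < y)); [|exact (open_gt 0 t Ht)].
      intros y Hy. unfold Rpower0, Rpower. destruct (Rlt_dec 0 y); lra.
    + apply continuous_exp_comp, (continuous_mult (fun _ => r) ln); [apply continuous_const|].
      now apply continuous_ln.
Qed.

Lemma continuous_delta (k x : R) : 0 <= k -> continuous (delta k) x.
Proof.
  intros [Hk|<-].
  - apply (continuous_ext (fun t => Rpower0 (2 * k) (Rabs (2 * sin t)))).
    + intros t. unfold delta, Rpower0.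
      destruct (Req_EM_T (sin t) 0) as [Hs|Hs], (Req_EM_T k 0),
        (Rlt_dec 0 (Rabs (2 * sin t))) as [Hp|Hp]; try lra.
      * rewrite Hs, Rmult_0_r, Rabs_R0 in Hp. lra.
      * exfalso. apply Hp, Rabs_pos_lt. lra.
    + apply (continuous_comp (fun t => Rabs (2 * sin t))).
      * apply continuous_Rabs_comp, (continuous_mult (fun _ => 2) sin);
          [apply continuous_const | apply continuous_sin].
      * apply continuous_Rpower0. lra.
  - apply (continuous_ext (fun _ => 1)); [|apply continuous_const].
    intros t. unfold delta, Rpower. rewrite Rmult_0_r, Rmult_0_l, exp_0.
    destruct (Req_EM_T (sin t) 0), (Req_EM_T 0 0); lra.
Qed.

Lemma delta_nonneg (k x : R) : 0 <= delta k x.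
Proof.
  unfold delta. destruct (Req_EM_T (sin x) 0); [destruct (Req_EM_T k 0); lra|].
  left. apply exp_pos.
Qed.

Lemma delta_pos (k x : R) : sin x <> 0 -> 0 < delta k x.
Proof. intros Hs. unfold delta. destruct (Req_EM_T (sin x) 0); [easy | apply exp_pos]. Qed.

Lemma delta_reflect (k x : R) : delta k (2 * PI - x) = delta k x.
Proof.
  unfold delta. rewrite sin_minus, sin_2PI, cos_2PI, Rmult_0_l, Rmult_1_l, Rminus_0_l.
  destruct (Req_EM_T (- sin x) 0), (Req_EM_T (sin x) 0); try lra.
  rewrite <- Rabs_Ropp. f_equal. f_equal. ring.
Qed.

(** * Trigonometric polynomials and the weighted inner product *)

Definition trig (N : nat) (e : Z -> C) (x : R) : C :=
  zsum N (fun j => e j * cis (IZR j * x))%C.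

Lemma Ccontinuous_trig (N : nat) (e : Z -> C) : Ccontinuous (trig N e).
Proof.
  apply (Ccontinuous_zsum N (fun j x => e j * cis (IZR j * x))%C). intros j.
  apply Ccontinuous_mult; [apply Ccontinuous_const | apply Ccontinuous_cis].
Qed.

(* Integrate against [e^{-i j0 x}]: only the [j0]-th Fourier coefficient survives. *)
Lemma trig_coef_eq_0 (N : nat) (e : Z -> C) :
  (forall x, 0 < x < 2 * PI -> sin x <> 0 -> trig N e x = 0%C) ->
  forall j0, (Z.abs j0 <= Z.of_nat N)%Z -> e j0 = 0%C.
Proof.
  intros He j0 Hj0.
  assert (H0 : int2pi (fun x => trig N e x * cis (IZR (- j0) * x))%C = 0%C).
  { apply int2pi_eq_0. intros x Hx Hs. rewrite He by auto. ring. }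
  rewrite (int2pi_ext _ (fun x => zsum N (fun j => e j * cis (IZR (j - j0) * x)))%C) in H0.
  2:{ intros x _. unfold trig. rewrite zsum_mult_r. apply zsum_ext_loc. intros j _.
      rewrite <- Cmult_assoc, cis_add, minus_IZR, opp_IZR. do 2 f_equal. ring. }
  rewrite (int2pi_zsum N (fun j x => e j * cis (IZR (j - j0) * x))%C) in H0
    by (intros; apply Ccontinuous_mult; [apply Ccontinuous_const | apply Ccontinuous_cis]).
  rewrite (zsum_ext_loc N _ (fun j => if Z.eq_dec j j0 then (e j0 * RtoC (2 * PI))%C else 0%C))
    in H0.
  2:{ intros j _. rewrite int2pi_scal, int2pi_cis by apply Ccontinuous_cis.
      destruct (Z.eq_dec (j - j0) 0), (Z.eq_dec j j0); try lia; [subst; reflexivity | ring]. }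
  rewrite zsum_kronecker in H0 by exact Hj0.
  apply (f_equal (fun z => z * RtoC (/ (2 * PI))))%C in H0.
  rewrite <- Cmult_assoc, <- RtoC_mult, Rinv_r, Cmult_1_r in H0 by (pose proof PI_RGT_0; lra).
  rewrite H0. ring.
Qed.

Definition inner2pi (k : R) (f g : R -> C) : C :=
  int2pi (fun x => f x * Cconj (g x) * RtoC (delta k x))%C.

Lemma inner2pi_eq_0_of_inner (k : R) (f g : R -> C) : inner k f g = 0%C -> inner2pi k f g = 0%C.
Proof.
  intros H. change (RtoC (/ (2 * PI)) * inner2pi k f g = 0)%C in H.
  apply (f_equal (Cmult (RtoC (2 * PI)))) in H.
  rewrite Cmult_assoc, <- RtoC_mult, Rinv_r, Cmult_1_l in H by (pose proof PI_RGT_0; lra).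
  rewrite H. ring.
Qed.

Lemma Ccontinuous_inner_integrand (k : R) (f g : R -> C) : 0 <= k ->
  Ccontinuous f -> Ccontinuous g ->
  Ccontinuous (fun x => f x * Cconj (g x) * RtoC (delta k x))%C.
Proof.
  intros Hk Hf Hg.
  apply Ccontinuous_mult; [apply Ccontinuous_mult; [exact Hf | now apply Ccontinuous_conj]|].
  apply Ccontinuous_RtoC. intros; now apply continuous_delta.
Qed.

Lemma inner2pi_trig_l (k : R) (N : nat) (e : Z -> C) (g : R -> C) : 0 <= k -> Ccontinuous g ->
  inner2pi k (trig N e) g = zsum N (fun j => e j * inner2pi k (fun x => cis (IZR j * x)) g)%C.
Proof.
  intros Hk Hg.
  assert (Hj : forall j, Ccontinuous (fun x => cis (IZR j * x) * Cconj (g x) * RtoC (delta k x))%C)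
    by (intros; apply Ccontinuous_inner_integrand; auto using Ccontinuous_cis).
  unfold inner2pi. erewrite zsum_ext_loc by (intros; symmetry; apply int2pi_scal, Hj).
  rewrite <- int2pi_zsum by (intros; apply Ccontinuous_mult; auto using Ccontinuous_const).
  apply int2pi_ext. intros x _. unfold trig. rewrite !zsum_mult_r. apply zsum_ext_loc.
  intros; ring.
Qed.

Lemma inner2pi_trig_r (k : R) (N : nat) (e : Z -> C) (f : R -> C) : 0 <= k -> Ccontinuous f ->
  inner2pi k f (trig N e) =
  zsum N (fun j => Cconj (e j) * inner2pi k f (fun x => cis (IZR j * x)))%C.
Proof.
  intros Hk Hf.
  assert (Hj : forall j, Ccontinuous (fun x => f x * Cconj (cis (IZR j * x)) * RtoC (delta k x))%C)
    by (intros; apply Ccontinuous_inner_integrand; auto using Ccontinuous_cis).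
  unfold inner2pi. erewrite zsum_ext_loc by (intros; symmetry; apply int2pi_scal, Hj).
  rewrite <- int2pi_zsum by (intros; apply Ccontinuous_mult; auto using Ccontinuous_const).
  apply int2pi_ext. intros x _. unfold trig. rewrite zsum_conj, zsum_mult_l, zsum_mult_r.
  apply zsum_ext_loc. intros. rewrite Cmult_conj. ring.
Qed.

(* [|f|^2 delta_k] is continuous and nonnegative, and [delta_k > 0] off the zeros of [sin]. *)
Lemma inner2pi_self_eq_0 (k : R) (f : R -> C) : 0 <= k -> Ccontinuous f -> inner2pi k f f = 0%C ->
  forall x, 0 < x < 2 * PI -> sin x <> 0 -> f x = 0%C.
Proof.
  intros Hk Hf H0 x Hx Hs.
  set (g := fun t => (fst (f t) * fst (f t) + snd (f t) * snd (f t)) * delta k t).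
  assert (Hg : forall t, continuous g t).
  { intros t. destruct (Hf t) as [F1 F2].
    exact (continuous_mult _ _ t
             (continuous_plus _ _ t (continuous_mult _ _ t F1 F1) (continuous_mult _ _ t F2 F2))
             (continuous_delta k t Hk)). }
  unfold inner2pi in H0. rewrite int2pi_pair in H0 by now apply Ccontinuous_inner_integrand.
  apply (f_equal fst) in H0. simpl in H0.
  rewrite (RInt_ext _ g) in H0 by (intros; unfold g, Cmult, Cconj, RtoC; simpl; ring).
  assert (Hgx : g x = 0).
  { apply (RInt_nonneg_eq_0 g 0 (2 * PI)); auto.
    intros t _. apply Rmult_le_pos; [nra | apply delta_nonneg]. }
  pose proof (delta_pos k x Hs). unfold g in Hgx.
  apply Rmult_integral in Hgx. destruct Hgx as [Hgx|]; [|lra].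
  destruct (f x) as [a b]. simpl in Hgx. unfold RtoC. f_equal; nra.
Qed.

(** * Non-symmetric Heckman-Opdam polynomials *)

Lemma is_HO_support (k : R) (m : Z) (c : Z -> C) (j : Z) :
  is_HO k m c -> (Z.abs m < Z.abs j)%Z -> c j = 0%C.
Proof.
  intros [_ [Hc _]] Hj. apply Hc.
  - intros ->. lia.
  - intros T. apply tri_abs_le in T. lia.
Qed.

Lemma is_HO_unique (k : R) (m : Z) (c c' : Z -> C) : 0 <= k ->
  is_HO k m c -> is_HO k m c' -> forall j, c j = c' j.
Proof.
  intros Hk Hc Hc'.
  set (N := Z.abs_nat m). set (e := fun j => (c j - c' j)%C).
  assert (Hout : forall j, ~ tri j m -> c j = c' j).
  { intros j Hj. destruct Hc as [Hc1 [Hc2 _]], Hc' as [Hc1' [Hc2' _]].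
    destruct (Z.eq_dec j m) as [->|Hjm];
      [rewrite Hc1, Hc1' | rewrite Hc2, Hc2' by auto]; reflexivity. }
  assert (Horth : forall j, tri j m -> inner2pi k (trig N e) (fun x => cis (IZR j * x)) = 0%C).
  { intros j Hj. destruct Hc as [_ [_ Hc3]], Hc' as [_ [_ Hc3']].
    pose proof (inner2pi_eq_0_of_inner _ _ _ (Hc3 j Hj)) as E.
    pose proof (inner2pi_eq_0_of_inner _ _ _ (Hc3' j Hj)) as E'.
    change (Efun_i m) with (trig N) in E, E'.
    transitivity (inner2pi k (trig N c) (fun x => cis (IZR j * x))
                  - inner2pi k (trig N c') (fun x => cis (IZR j * x)))%C; [|rewrite E, E'; ring].
    rewrite !inner2pi_trig_l, <- zsum_minus by auto using Ccontinuous_cis.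
    apply zsum_ext_loc. intros; unfold e; ring. }
  assert (Hnorm : inner2pi k (trig N e) (trig N e) = 0%C).
  { rewrite inner2pi_trig_r, <- (zsum_zero N) by auto using Ccontinuous_trig.
    apply zsum_ext_loc. intros j _.
    destruct (classic (tri j m)) as [T|T].
    - rewrite Horth by exact T. ring.
    - unfold e. rewrite Hout, Cminus_conj by exact T. ring. }
  pose proof (inner2pi_self_eq_0 k _ Hk (Ccontinuous_trig N e) Hnorm) as Hvan.
  intros j. destruct (Z_le_gt_dec (Z.abs j) (Z.of_nat N)) as [Hj|Hj].
  - pose proof (trig_coef_eq_0 N e Hvan j Hj) as Ej. unfold e in Ej.
    replace (c j) with (c j - c' j + c' j)%C by ring. rewrite Ej. ring.
  - unfold N in Hj. rewrite Nat2Z.inj_abs_nat in Hj.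
    rewrite (is_HO_support k m c), (is_HO_support k m c') by (auto; lia). reflexivity.
Qed.

Lemma trig_one_sub_reflect (N1 N2 : nat) (c : Z -> C) (y : R) :
  (forall l, (Z.of_nat N2 < Z.abs l)%Z -> c l = 0%C) ->
  (forall l, (Z.of_nat N1 < Z.abs l)%Z -> c (1 - l)%Z = 0%C) ->
  trig N1 (fun l => c (1 - l)%Z) (2 * PI - y) = (trig N2 c y * cis (- y))%C.
Proof.
  intros H2 H1. unfold trig. rewrite zsum_mult_r.
  rewrite <- (zsum_one_sub N1 N2 (fun l => c l * cis (IZR l * y) * cis (- y)))%C.
  - apply zsum_ext_loc. intros l _. rewrite <- Cmult_assoc, cis_add. f_equal.
    rewrite <- (cis_periodic (IZR (1 - l) * y + - y) l). f_equal. rewrite minus_IZR. ring.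
  - intros l Hl. rewrite H2 by exact Hl. ring.
  - intros l Hl. rewrite H1 by exact Hl. ring.
Qed.

Lemma inner2pi_trig_one_sub (k : R) (N1 N2 : nat) (c : Z -> C) (j : Z) : 0 <= k ->
  (forall l, (Z.of_nat N2 < Z.abs l)%Z -> c l = 0%C) ->
  (forall l, (Z.of_nat N1 < Z.abs l)%Z -> c (1 - l)%Z = 0%C) ->
  inner2pi k (trig N1 (fun l => c (1 - l)%Z)) (fun x => cis (IZR j * x)) =
  inner2pi k (trig N2 c) (fun x => cis (IZR (1 - j) * x)).
Proof.
  intros Hk H2 H1. unfold inner2pi.
  rewrite <- int2pi_reflect
    by (apply Ccontinuous_inner_integrand; auto using Ccontinuous_trig, Ccontinuous_cis).
  apply int2pi_ext. intros y _.
  rewrite delta_reflect, (trig_one_sub_reflect N1 N2 c), !cis_conj by assumption.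
  rewrite <- (Cmult_assoc (trig N2 c y)), cis_add.
  rewrite <- (cis_periodic (- (IZR (1 - j) * y)) (- j)).
  do 3 f_equal. rewrite minus_IZR, opp_IZR. ring.
Qed.

Lemma is_HO_one_sub_support (k : R) (m : Z) (c : Z -> C) : is_HO k (1 - m) c ->
  (forall l, (Z.of_nat (Z.abs_nat (1 - m)) < Z.abs l)%Z -> c l = 0%C) /\
  (forall l, (Z.of_nat (Z.abs_nat m) < Z.abs l)%Z -> c (1 - l)%Z = 0%C).
Proof.
  intros Hc. rewrite !Nat2Z.inj_abs_nat. split.
  - intros l Hl. now apply (is_HO_support k (1 - m)).
  - intros l Hl. destruct Hc as [_ [Hc2 _]]. apply Hc2; [lia|].
    rewrite <- tri_one_sub. intros T. apply tri_abs_le in T. lia.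
Qed.

Lemma is_HO_one_sub (k : R) (m : Z) (c : Z -> C) : 0 <= k ->
  is_HO k (1 - m) c -> is_HO k m (fun l => c (1 - l)%Z).
Proof.
  intros Hk Hc. destruct (is_HO_one_sub_support k m c Hc) as [Hsupp Hsupp'].
  destruct Hc as [Hc1 [Hc2 Hc3]].
  split; [exact Hc1 | split].
  - intros j Hj T. apply Hc2; [lia | now rewrite <- tri_one_sub].
  - intros j Hj.
    change (RtoC (/ (2 * PI)) * inner2pi k (trig (Z.abs_nat m) (fun l => c (1 - l)%Z))
                                 (fun x => cis (IZR j * x)) = 0)%C.
    rewrite (inner2pi_trig_one_sub k _ (Z.abs_nat (1 - m))) by assumption.
    apply Hc3, (proj1 (tri_one_sub j m) Hj).
Qed.

Lemma Efun_one_sub (m : Z) (c : Z -> C) (x : R) :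
  (forall l, (Z.of_nat (Z.abs_nat (1 - m)) < Z.abs l)%Z -> c l = 0%C) ->
  (forall l, (Z.of_nat (Z.abs_nat m) < Z.abs l)%Z -> c (1 - l)%Z = 0%C) ->
  Efun m (fun l => c (1 - l)%Z) x = (RtoC (exp x) * Efun (1 - m) c (- x))%C.
Proof.
  intros H2 H1. set (f := fun l => (c l * RtoC (exp ((1 - IZR l) * x)))%C).
  unfold Efun. rewrite zsum_mult_l, (zsum_ext_loc (Z.abs_nat (1 - m)) _ f).
  2:{ intros l _. unfold f. replace ((1 - IZR l) * x) with (x + IZR l * - x) by ring.
      rewrite exp_plus, RtoC_mult. ring. }
  rewrite <- (zsum_one_sub (Z.abs_nat m) (Z.abs_nat (1 - m)) f); unfold f.
  - apply zsum_ext_loc. intros j _. rewrite minus_IZR. do 4 f_equal. ring.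
  - intros l Hl. rewrite H2 by exact Hl. ring.
  - intros l Hl. rewrite H1 by exact Hl. ring.
Qed.

Theorem mainTheorem2 :
  forall (k : R), 0 <= k ->
  forall (n : Z) (c1 c2 : Z -> C),
    is_HO k (n + 1)%Z c1 -> is_HO k (- n)%Z c2 ->
    forall x : R,
      Efun (n + 1)%Z c1 x = (RtoC (exp x) * Efun (- n)%Z c2 (- x))%C.
Proof.
  intros k Hk n c1 c2 H1 H2 x.
  replace (- n)%Z with (1 - (n + 1))%Z in * by lia.
  pose proof (is_HO_unique k _ c1 _ Hk H1 (is_HO_one_sub k _ c2 Hk H2)) as Hc.
  destruct (is_HO_one_sub_support k _ c2 H2) as [Hsupp Hsupp'].
  rewrite <- (Efun_one_sub _ c2 x Hsupp Hsupp').
  unfold Efun. apply zsum_ext_loc. intros j _. now rewrite Hc.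
Qed.
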